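(* Let $\mathfrak g$ be a finite-dimensional two-step solvable Lie algebra over a field of characteristic zero with $\mathfrak g^\infty=\mathfrak g^3$. Then $\mathfrak g$ admits an LR-structure.
   Context: Two-step solvable means $[[\mathfrak g,\mathfrak g],[\mathfrak g,\mathfrak g]]=0$. Lower central series: $\mathfrak g^1=\mathfrak g$, $\mathfrak g^{i+1}=[\mathfrak g,\mathfrak g^i]$, $\mathfrak g^\infty=\bigcap_i\mathfrak g^i$. An LR-structure on a Lie algebra $\mathfrak g$ is a bilinear product $\cdot$ on its underlying space with $x\cdot(y\cdot z)=y\cdot(x\cdot z)$, $(x\cdot y)\cdot z=(x\cdot z)\cdot y$ and $x\cdot y-y\cdot x=[x,y]$ for all $x,y,z$. *)

From HB Require Import structures.
From mathcomp Require Import all_boot all_order all_algebra.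
Set Implicit Arguments. Unset Strict Implicit. Unset Printing Implicit Defensive.
Import GRing.Theory.
Local Open Scope ring_scope.

Section Lie.
Variables (K : fieldType) (V : vectType K).

Definition bilinear_map (f : V -> V -> V) : Prop :=
  (forall (a : K) (x y z : V), f (a *: x + y) z = a *: f x z + f y z) /\
  (forall (a : K) (x y z : V), f x (a *: y + z) = a *: f x y + f x z).

Definition is_lie_bracket (br : V -> V -> V) : Prop :=
  [/\ bilinear_map br,
      (forall x, br x x = 0) &
      (forall x y z, br x (br y z) + br y (br z x) + br z (br x y) = 0)].

(* [A, B] : the subspace spanned by all brackets [a, b], a in A, b in B
   (by bilinearity, spanned by brackets of basis vectors) *)
Definition lie_sp (br : V -> V -> V) (A B : {vspace V}) : {vspace V} :=
  (<<[seq br x y | x <- (vbasis A : seq V), y <- (vbasis B : seq V)]>>)%VS.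

Fixpoint lcs0 (br : V -> V -> V) (n : nat) : {vspace V} :=
  match n with
  | 0 => fullv
  | n'.+1 => lie_sp br fullv (lcs0 br n')
  end.

(* lower central series with the paper's indexing: g^1 = g, g^(i+1) = [g, g^i] *)
Definition lcs (br : V -> V -> V) (i : nat) : {vspace V} := lcs0 br i.-1.

Definition lcs_inf_is (br : V -> V -> V) (W : {vspace V}) : Prop :=
  forall v : V, v \in W <-> (forall i : nat, (0 < i)%N -> v \in lcs br i).

Definition two_step_solvable (br : V -> V -> V) : Prop :=
  lie_sp br (lie_sp br fullv fullv) (lie_sp br fullv fullv) = 0%VS.

Definition LR_structure (br : V -> V -> V) (p : V -> V -> V) : Prop :=
  [/\ bilinear_map p,
      (forall x y z, p x (p y z) = p y (p x z)),
      (forall x y z, p (p x y) z = p (p x z) y) &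
      (forall x y, p x y - p y x = br x y)].

End Lie.

(* Write g2 = [g, g] (abelian) and g3 = [g, g2]; the hypothesis gives
   g3 = [g, g3].  Fix a basis (e_i) of g.  The maps ad e_i commute on g3 and
   g3 is the sum of their images, so a Fitting-decomposition induction yields
   maps S_i on g3 commuting with every ad y such that sum_i ad e_i o S_i = id.
   With them we build a projection proj3 of g onto g3 satisfying
   [z, proj3 u] = [z, u] for u in g2, so that dproj = 1 - proj3 sends g2 into
   the centre, and a linear map coch : g -> g3 whose coboundary is
   proj3 o [_, _].  The product
       x . y = 1/2 dproj [dproj x, dproj y] + [dproj x, w y],
       w = coch o dproj + proj3,
   is then an LR-structure: (x . y) . z = 0, x . (y . z) is symmetric in x, y
   because ad's commute on g2, and x . y - y . x = [x, y]. *)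
From HB Require Import structures.
From mathcomp Require Import all_boot all_order all_algebra.
Import GRing.Theory.
Local Open Scope ring_scope.
Set Implicit Arguments. Unset Strict Implicit. Unset Printing Implicit Defensive.

(* [linfun f] evaluates to f as soon as f is linear; the local alias
   [linear_fun] carries the linear instance required by [lfunE]. *)
Section LinfunOfLinear.
Variables (K : fieldType) (V : vectType K) (f : V -> V).
Hypothesis f_linear : forall (a : K) x y, f (a *: x + y) = a *: f x + f y.

Let linear_fun : V -> V := f.
Let linear_funP : linear linear_fun.
Proof. by move=> a x y; apply: f_linear. Qed.
HB.instance Definition _ :=
  GRing.isLinear.Build K V V *:%R linear_fun linear_funP.

Lemma linfun_linE v : linfun f v = f v.
Proof. exact: (lfunE linear_fun v). Qed.
End LinfunOfLinear.

Section LinearAlgebra.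
Variables (K : fieldType) (V : vectType K).
Implicit Types (T C : 'End(V)) (M N R : {vspace V}).

Definition lfun_iter T k : 'End(V) := iter k (fun g => T \o g)%VF \1%VF.

Lemma lfun_iterE T k v : lfun_iter T k v = iter k T v.
Proof. by elim: k v => [|k IH] v /=; rewrite ?id_lfunE // comp_lfunE IH. Qed.

Lemma lfun_iterS T k : lfun_iter T k.+1 = (T \o lfun_iter T k)%VF.
Proof. by []. Qed.

Lemma lfun_iterSr T k : lfun_iter T k.+1 = (lfun_iter T k \o T)%VF.
Proof. by apply/lfunP => v; rewrite comp_lfunE !lfun_iterE iterSr. Qed.

Lemma lfun_iter_stable T M k :
  (T @: M <= M)%VS -> (lfun_iter T k @: M <= M)%VS.
Proof.
move=> sTM; elim: k => [|k IH]; first by rewrite lim1g.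
by rewrite lfun_iterSr limg_comp (subv_trans _ IH) // limgS.
Qed.

Lemma lfun_iter_comm T C M k : (T @: M <= M)%VS ->
  {in M, forall m, C (T m) = T (C m)} ->
  {in M, forall m, C (lfun_iter T k m) = lfun_iter T k (C m)}.
Proof.
move=> sTM cCT; elim: k => [|k IH] m Mm; first by rewrite !id_lfunE.
by rewrite lfun_iterSr !comp_lfunE IH ?cCT // (subvP sTM) // memv_img.
Qed.

(* A map sending R onto R is injective on R (dimension count). *)
Lemma limg_onto_inj T R : (T @: R)%VS = R -> {in R &, injective T}.
Proof.
move=> eTR x y Rx Ry eT.
have /eqP : \dim (R :&: lker T) = 0%N.
  by have /eqP := limg_ker_dim T R; rewrite eTR -{2}[\dim R]add0n eqn_add2r => /eqP.
rewrite dimv_eq0 => /eqP kerR0.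
have : x - y \in (R :&: lker T)%VS.
  by rewrite memv_cap memvB //= memv_ker linearB /= eT subrr.
by rewrite kerR0 memv0 subr_eq0 => /eqP.
Qed.

Lemma daddv_pi_compl N R v : (N :&: R = 0)%VS -> v \in R -> daddv_pi N R v = 0.
Proof.
move=> dNR Rv; have := daddv_pi_add dNR (memv_add (mem0v N) Rv).
have dRN : (R :&: N = 0)%VS by rewrite capvC.
rewrite add0r (daddv_pi_id dRN Rv).
by move/(canRL (addrK v)); rewrite subrr.
Qed.

Lemma daddv_pi_comm N R C m : (N :&: R = 0)%VS ->
  (C @: N <= N)%VS -> (C @: R <= R)%VS -> m \in (N + R)%VS ->
  daddv_pi N R (C m) = C (daddv_pi N R m).
Proof.
move=> dNR sN sR /memv_addP[u Nu [v Rv ->]].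
have CNu : C u \in N by rewrite (subvP sN) // memv_img.
have CRv : C v \in R by rewrite (subvP sR) // memv_img.
rewrite !linearD /= (daddv_pi_id dNR Nu) (daddv_pi_compl dNR Rv) linear0 addr0.
by rewrite (daddv_pi_id dNR CNu) (daddv_pi_compl dNR CRv) addr0.
Qed.

(* Fitting decomposition of a T-stable space M, with d = dim M: M is the
   direct sum of its T-nilpotent part M ∩ ker T^d and of its T-core T^d(M),
   on which T is onto. *)
Definition fit_nil T M := (M :&: lker (lfun_iter T (\dim M)))%VS.
Definition fit_core T M := (lfun_iter T (\dim M) @: M)%VS.

Section Fitting.
Variables (T : 'End(V)) (M : {vspace V}).
Hypothesis sTM : (T @: M <= M)%VS.
Let iter_img j := (lfun_iter T j @: M)%VS.

Lemma iter_imgS j : iter_img j.+1 = (T @: iter_img j)%VS.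
Proof. by rewrite /iter_img lfun_iterS limg_comp. Qed.

Lemma iter_img_decr j : (iter_img j.+1 <= iter_img j)%VS.
Proof. by rewrite /iter_img lfun_iterSr limg_comp limgS. Qed.

Lemma iter_img_stable_from j : iter_img j.+1 = iter_img j -> forall i, (j <= i)%N -> iter_img i.+1 = iter_img i.
Proof.
move=> ej; elim=> [|i IH]; first by rewrite leqn0 => /eqP <-.
rewrite leq_eqVlt => /orP[/eqP <- //|]; rewrite ltnS => /IH eI.
by rewrite iter_imgS eI -iter_imgS.
Qed.

Lemma iter_img_dim j : (forall i, (i < j)%N -> iter_img i.+1 != iter_img i) ->
  (\dim (iter_img j) + j <= \dim M)%N.
Proof.
elim: j => [|j IH] H; first by rewrite addn0 /iter_img lim1g.
have := IH (fun i lt => H i (ltnW lt)).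
have := ltn_leqif (dimv_leqif_eq (iter_img_decr j)); rewrite H // => lt.
by rewrite addnS; apply: leq_trans; rewrite ltn_add2r lt.
Qed.

Lemma iter_img_stable : iter_img (\dim M).+1 = iter_img (\dim M).
Proof.
apply/eqP; apply/negPn/negP => neq.
have H i : (i < (\dim M).+1)%N -> iter_img i.+1 != iter_img i.
  rewrite ltnS => le; apply/eqP => ei.
  by move/negP: neq; apply; apply/eqP; apply: iter_img_stable_from ei _ le.
by have := iter_img_dim H; rewrite addnS ltnNge leq_addl.
Qed.

Lemma fit_core_onto : (T @: fit_core T M)%VS = fit_core T M.
Proof. by rewrite -[RHS]iter_img_stable iter_imgS. Qed.

Lemma fitting_decomposition :
  (fit_nil T M :&: fit_core T M = 0)%VS /\ (fit_nil T M + fit_core T M = M)%VS.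
Proof.
have onto k : (lfun_iter T k @: fit_core T M)%VS = fit_core T M.
  by elim: k => [|k IH]; rewrite ?lim1g // lfun_iterS limg_comp IH fit_core_onto.
have direct : (fit_nil T M :&: fit_core T M = 0)%VS.
  apply/eqP; rewrite -subv0; apply/subvP => v.
  rewrite !memv_cap memv_ker => /andP[/andP[_ /eqP Pv] Rv].
  rewrite memv0; apply/eqP; apply: (limg_onto_inj (onto (\dim M)) Rv (mem0v _)).
  by rewrite Pv linear0.
split => //; apply/eqP; rewrite eqEdim subv_add capvSl lfun_iter_stable //=.
by rewrite dimv_disjoint_sum // limg_ker_dim.
Qed.
End Fitting.

Lemma onto_inverse T R : (T @: R)%VS = R -> exists U : 'End(V),
  [/\ {in R, forall r, U r \in R}, {in R, forall r, T (U r) = r} &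
      forall C, (C @: R <= R)%VS -> {in R, forall x, C (T x) = T (C x)} ->
        {in R, forall r, U (C r) = C (U r)}].
Proof.
move=> eR; have Tinj := limg_onto_inj eR.
(* F extends T on R by the identity on a complement; it is invertible. *)
pose F := (T \o projv R + (\1 - projv R))%VF.
have FE v : F v = T (projv R v) + (v - projv R v).
  by rewrite /F add_lfunE comp_lfunE add_lfunE opp_lfunE id_lfunE.
have kF : lker F == 0%VS.
  rewrite -subv0; apply/subvP => v; rewrite memv_ker memv0 FE => /eqP Fv0.
  have TRv : T (projv R v) \in R by rewrite -{2}eR memv_img // memv_proj.
  have TRv0 : T (projv R v) = 0.
    apply/eqP; rewrite -memv0 -(capv_compl R) memv_cap TRv /=.
    have -> : T (projv R v) = - (v - projv R v) by apply/eqP; rewrite -addr_eq0 Fv0.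
    by rewrite memvN memv_projC.
  move/eqP: Fv0; rewrite TRv0 add0r subr_eq0 => /eqP ev.
  have Rv : v \in R by rewrite ev memv_proj.
  by apply/eqP; apply: Tinj Rv (mem0v _) _; rewrite {1}ev TRv0 linear0.
have UP r : r \in R -> exists2 r0, r0 \in R & (F^-1)%VF r = r0 /\ T r0 = r.
  rewrite -{1}eR => /memv_imgP[r0 Rr0 ->]; exists r0 => //; split => //.
  have -> : T r0 = F r0 by rewrite FE projv_id // subrr addr0.
  exact: lker0_lfunK.
exists (F^-1)%VF; split.
- by move=> r /UP[r0 ? [-> _]].
- by move=> r /UP[r0 ? [-> ->]].
move=> C sC cC r Rr.
have CR x : x \in R -> C x \in R by move=> Rx; rewrite (subvP sC) // memv_img.
have [r0 Rr0 [-> Tr0]] := UP r Rr.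
have [r1 Rr1 [-> Tr1]] := UP _ (CR _ Rr).
by apply: Tinj; rewrite ?CR // Tr1 -cC // Tr0.
Qed.

Section FittingCommutant.
Variables (T C : 'End(V)) (M : {vspace V}).
Hypotheses (sTM : (T @: M <= M)%VS) (sCM : (C @: M <= M)%VS).
Hypothesis cCT : {in M, forall m, C (T m) = T (C m)}.

Lemma fit_parts_stable :
  (C @: fit_nil T M <= fit_nil T M)%VS /\ (C @: fit_core T M <= fit_core T M)%VS.
Proof.
have cCP := lfun_iter_comm (\dim M) sTM cCT.
split; apply/subvP => _ /memv_imgP[u Hu ->].
  move: Hu; rewrite !memv_cap !memv_ker => /andP[Mu /eqP Pu].
  by rewrite (subvP sCM) ?memv_img //= -cCP // Pu linear0.
move/memv_imgP: Hu => [w Mw ->]; rewrite cCP //.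
by apply: memv_img; rewrite (subvP sCM) ?memv_img.
Qed.

Lemma fit_proj_comm :
  {in M, forall m, daddv_pi (fit_nil T M) (fit_core T M) (C m)
                   = C (daddv_pi (fit_nil T M) (fit_core T M) m)} /\
  {in M, forall m, daddv_pi (fit_core T M) (fit_nil T M) (C m)
                   = C (daddv_pi (fit_core T M) (fit_nil T M) m)}.
Proof.
have [dNR eNR] := fitting_decomposition sTM.
have [sN sR] := fit_parts_stable.
have dRN : (fit_core T M :&: fit_nil T M = 0)%VS by rewrite capvC.
by split=> m Mm; apply: daddv_pi_comm; rewrite // ?eNR // addvC eNR.
Qed.
End FittingCommutant.

(* The
   proof is by induction on n, splitting M along the Fitting decomposition of
   T_(n-1): on the core T_(n-1) is inverted, the nilpotent part is handled by
   T_0, ..., T_(n-2). *)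
Section CommutingRightInverses.
Variables (T : nat -> 'End(V)) (Q : 'End(V) -> Prop).

Definition centralizes_family n M := forall C, Q C ->
  (C @: M <= M)%VS /\ forall i, (i < n)%N -> {in M, forall m, C (T i m) = T i (C m)}.

Definition right_inverses n M (S : nat -> 'End(V)) :=
  [/\ forall i, (i < n)%N -> (S i @: M <= M)%VS,
      forall i C m, (i < n)%N -> Q C -> m \in M -> S i (C m) = C (S i m) &
      forall m, m \in M -> \sum_(i < n) T i (S i m) = m].

Section Step.
Variables (n : nat) (M : {vspace V}).
Hypothesis QM : centralizes_family n.+1 M.
Hypothesis QT : forall i, (i < n.+1)%N -> Q (T i).
Hypothesis M_covered : (M <= \sum_(i < n.+1) (T i @: M))%VS.

Let N := fit_nil (T n) M.
Let R := fit_core (T n) M.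
Let sTnM : (T n @: M <= M)%VS := (QM (QT (ltnSn n))).1.

Lemma step_parts_stable C : Q C -> (C @: N <= N)%VS /\ (C @: R <= R)%VS.
Proof.
by move=> QC; have [sC cC] := QM QC; apply: fit_parts_stable => //; apply: cC.
Qed.

Lemma step_proj_comm C : Q C ->
  {in M, forall m, daddv_pi N R (C m) = C (daddv_pi N R m)} /\
  {in M, forall m, daddv_pi R N (C m) = C (daddv_pi R N m)}.
Proof.
by move=> QC; have [sC cC] := QM QC; apply: fit_proj_comm => //; apply: cC.
Qed.

(* The nilpotent part N of T_n is covered by T_0, ..., T_(n-1): modulo
   J = sum_(i<n) T_i(N), every element of N lies in T_n^k(N) for all k, and
   T_n^(dim M) vanishes on N. *)
Lemma fit_nil_covered : (N <= \sum_(i < n) (T i @: N))%VS.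
Proof.
have NM : (N <= M)%VS by apply: capvSl.
have [dNR eNR] := fitting_decomposition sTnM.
set J := (\sum_(i < n) (T i @: N))%VS.
have TJ : (T n @: J <= J)%VS.
  rewrite limg_sum; apply/subv_sumP => i _; apply: (sumv_sup i) => //.
  rewrite -limg_comp (eq_in_limg (g := (T i \o T n)%VF)).
    by rewrite limg_comp limgS // (step_parts_stable (QT (ltnSn n))).1.
  move=> x Nx; rewrite !comp_lfunE (QM (QT (ltnSn n))).2 ?(subvP NM) //.
  exact: leqW.
have N_TN_J : (N <= T n @: N + J)%VS.
  apply/subvP => m Nm; have Mm := subvP NM m Nm.
  have [vs Hvs em] := memv_sumP (subvP M_covered m Mm).
  rewrite -(daddv_pi_id dNR Nm) em linear_sum /=.
  have : \sum_(i < n.+1) daddv_pi N R (vs i) \in (\sum_(i < n.+1) (T i @: N))%VS.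
    apply: memv_sumr => i _; have /memv_imgP[w Mw ->] := Hvs i isT.
    by rewrite (step_proj_comm (QT (ltn_ord i))).1 // memv_img // memv_pi.
  by rewrite [in X in _ \in X -> _]big_ord_recr /= addvC.
have N_iter_J k m : m \in N -> exists2 u, u \in N & m - lfun_iter (T n) k u \in J.
  move=> Nm; elim: k => [|k [u Nu Hu]].
    by exists m => //; rewrite id_lfunE subrr mem0v.
  have /memv_addP[_ /memv_imgP[u' Nu' ->] [b Jb eu]] := subvP N_TN_J u Nu.
  exists u' => //.
  have -> : m - lfun_iter (T n) k.+1 u' = (m - lfun_iter (T n) k u) + lfun_iter (T n) k b.
    by rewrite eu linearD lfun_iterSr comp_lfunE /= opprD addrA subrK.
  by rewrite memvD // (subvP (lfun_iter_stable k TJ)) // memv_img.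
apply/subvP => m Nm; have [u Nu] := N_iter_J (\dim M) m Nm.
by move: Nu; rewrite memv_cap memv_ker => /andP[_ /eqP ->]; rewrite subr0.
Qed.
End Step.

Lemma commuting_right_inverses n M :
  centralizes_family n M -> (forall i, (i < n)%N -> Q (T i)) ->
  (M <= \sum_(i < n) (T i @: M))%VS -> exists S, right_inverses n M S.
Proof.
elim: n M => [|n IH] M QM QT M_covered.
  exists (fun _ => 0); split => // m Mm; rewrite big_ord0.
  by have := subvP M_covered m Mm; rewrite big_ord0 memv0 => /eqP ->.
have sTnM := (QM _ (QT n (ltnSn n))).1.
have [dNR eNR] := fitting_decomposition sTnM.
set N := fit_nil (T n) M in dNR eNR *; set R := fit_core (T n) M in dNR eNR *.
have NM : (N <= M)%VS by apply: capvSl.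
have RM : (R <= M)%VS by apply: lfun_iter_stable.
have [U [UR TU UC]] := onto_inverse (fit_core_onto sTnM).
have [S' [S'N S'C S'T]] : exists S', right_inverses n N S'.
  apply: IH; last exact: fit_nil_covered.
  - move=> C QC; split; first exact: (step_parts_stable QM QT QC).1.
    by move=> i m lt Nm; apply: (QM _ QC).2; rewrite ?(subvP NM) //; apply: leqW.
  - by move=> i lt; apply: QT; apply: leqW.
(* On N use the inverses S' given by induction, on R the inverse of T_n. *)
exists (fun i => if (i < n)%N then (S' i \o daddv_pi N R)%VF else (U \o daddv_pi R N)%VF).
split.
- move=> i _; apply/subvP => _ /memv_imgP[w _ ->]; case: ifP => lti; rewrite comp_lfunE.
    by rewrite (subvP NM) // (subvP (S'N i lti)) // memv_img // memv_pi.
  by rewrite (subvP RM) // UR // memv_pi.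
- move=> i C m _ QC Mm; have [piNC piRC] := step_proj_comm QM QT QC.
  case: ifP => lti; rewrite !comp_lfunE.
    by rewrite piNC // S'C // memv_pi.
  have [_ sR] := step_parts_stable QM QT QC.
  rewrite piRC // UC // ?memv_pi // => x Rx.
  by apply: (QM _ QC).2 => //; apply: (subvP RM).
- move=> m Mm; rewrite big_ord_recr /= ltnn comp_lfunE TU ?memv_pi //.
  rewrite (eq_bigr (fun i : 'I_n => T i (S' i (daddv_pi N R m)))); last first.
    by move=> i _; rewrite /= ltn_ord comp_lfunE.
  by rewrite S'T ?memv_pi // daddv_pi_add // eNR.
Qed.
End CommutingRightInverses.
End LinearAlgebra.

Section LieBracket.
Variables (K : fieldType) (V : vectType K) (br : V -> V -> V).
Hypothesis br_linl : forall (a : K) x y z, br (a *: x + y) z = a *: br x z + br y z.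
Hypothesis br_linr : forall (a : K) x y z, br x (a *: y + z) = a *: br x y + br x z.
Hypothesis br_alt : forall x, br x x = 0.
Hypothesis br_jacobi : forall x y z, br x (br y z) + br y (br z x) + br z (br x y) = 0.

Definition ad (x : V) : 'End(V) := linfun (br x).
Definition rad (y : V) : 'End(V) := linfun (br^~ y).
Lemma adE x y : ad x y = br x y.
Proof. by apply: linfun_linE => a u v; apply: br_linr. Qed.
Lemma radE x y : rad y x = br x y.
Proof. by apply: linfun_linE => a u v; apply: br_linl. Qed.

Lemma brDl x y z : br (x + y) z = br x z + br y z.
Proof. by rewrite -!radE linearD. Qed.
Lemma brDr x y z : br x (y + z) = br x y + br x z.
Proof. by rewrite -!adE linearD. Qed.
Lemma brZl (k : K) x z : br (k *: x) z = k *: br x z.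
Proof. by rewrite -!radE linearZ. Qed.
Lemma brZr (k : K) x z : br x (k *: z) = k *: br x z.
Proof. by rewrite -!adE linearZ. Qed.
Lemma brNr x z : br x (- z) = - br x z.
Proof. by rewrite -!adE linearN. Qed.
Lemma brBl x y z : br (x - y) z = br x z - br y z.
Proof. by rewrite -!radE linearB. Qed.
Lemma brBr x y z : br x (y - z) = br x y - br x z.
Proof. by rewrite -!adE linearB. Qed.
Lemma brsuml I r (P : pred I) (F : I -> V) z :
  br (\sum_(i <- r | P i) F i) z = \sum_(i <- r | P i) br (F i) z.
Proof. by rewrite -radE linear_sum; apply: eq_bigr => i _; apply: radE. Qed.
Lemma brsumr I r (P : pred I) (F : I -> V) z :
  br z (\sum_(i <- r | P i) F i) = \sum_(i <- r | P i) br z (F i).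
Proof. by rewrite -adE linear_sum; apply: eq_bigr => i _; apply: adE. Qed.

Lemma br_anti x y : br x y = - br y x.
Proof.
apply/eqP; rewrite -addr_eq0; have := br_alt (x + y).
by rewrite brDl !brDr !br_alt add0r addr0 => ->.
Qed.

Lemma lie_sp_mem (A B : {vspace V}) x y :
  x \in A -> y \in B -> br x y \in lie_sp br A B.
Proof.
move=> Ax By; rewrite (coord_vbasis Ax) (coord_vbasis By) brsuml.
apply: memv_suml => i _; rewrite brZl brsumr; apply: memvZ; apply: memv_suml => j _.
by rewrite brZr; apply: memvZ; apply: memv_span; apply: allpairs_f; apply: memt_nth.
Qed.

Lemma lie_sp_sub (A B W : {vspace V}) :
  (forall x y, x \in A -> y \in B -> br x y \in W) -> (lie_sp br A B <= W)%VS.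
Proof.
move=> H; apply/span_subvP => _ /allpairsP[[x y] [/= xA yB ->]].
by apply: H; apply: vbasis_mem.
Qed.

Section TwoStepSolvable.
Local Notation g2 := (lie_sp br fullv fullv).
Local Notation g3 := (lie_sp br fullv g2).
Hypothesis g2_abelian_sp : lie_sp br g2 g2 = 0%VS.
Hypothesis g3_sub_g4 : (g3 <= lie_sp br fullv g3)%VS.
Hypothesis two_neq0 : (2%:R : K) != 0.

Lemma br_g2 x y : br x y \in g2.
Proof. exact: lie_sp_mem (memvf x) (memvf y). Qed.
Lemma br_g3 x u : u \in g2 -> br x u \in g3.
Proof. exact: lie_sp_mem (memvf x). Qed.
Lemma g3_sub_g2 : (g3 <= g2)%VS.
Proof. by apply: lie_sp_sub => x y _ _; apply: br_g2. Qed.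
Lemma g2_abelian u v : u \in g2 -> v \in g2 -> br u v = 0.
Proof. by move=> Hu Hv; have := lie_sp_mem Hu Hv; rewrite g2_abelian_sp memv0 => /eqP. Qed.
Lemma g3_abelian u v : u \in g3 -> v \in g3 -> br u v = 0.
Proof. by move=> Hu Hv; apply: g2_abelian; apply: (subvP g3_sub_g2). Qed.

(* By the Jacobi identity, ad x and ad y commute on the abelian ideal g2. *)
Lemma ad_comm_g2 x y u : u \in g2 -> br x (br y u) = br y (br x u).
Proof.
move=> Hu; have := br_jacobi x y u.
rewrite (g2_abelian Hu (br_g2 x y)) addr0 (br_anti u x) brNr.
by move/eqP; rewrite subr_eq0 => /eqP.
Qed.

Local Notation n := (\dim (fullv : {vspace V})).
Local Notation e i := ((vbasis (fullv : {vspace V}))`_i).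
Definition ad_basis i : 'End(V) := ad (e i).
Definition is_ad_basis C := exists2 j, (j < n)%N & C = ad_basis j.

(* Since g3 = [g, g3] = sum_i ad e_i (g3), the commuting family (ad e_i) has
   right inverses on g3 commuting with it. *)
Lemma ad_basis_right_inverses :
  exists S, right_inverses ad_basis is_ad_basis n g3 S.
Proof.
apply: commuting_right_inverses.
- move=> _ [j jn ->]; split.
    apply/subvP => _ /memv_imgP[m Mm ->]; rewrite adE br_g3 //.
    exact: (subvP g3_sub_g2).
  by move=> i lt m Mm; rewrite !adE ad_comm_g2 // (subvP g3_sub_g2).
- by move=> i lt; exists i.
apply: subv_trans g3_sub_g4 _; apply: lie_sp_sub => x y _ g3y.
have xe := coord_vbasis (memvf x).
rewrite xe brsuml; apply: memv_suml => i _; rewrite brZl; apply: memvZ.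
by apply: (subvP (sumv_sup i _ (subvv _))) => //=; rewrite -adE memv_img.
Qed.

Section Construction.
Variable S : nat -> 'End(V).
Hypothesis S_right_inverses : right_inverses ad_basis is_ad_basis n g3 S.

Lemma S_g3 i m : (i < n)%N -> m \in g3 -> S i m \in g3.
Proof.
by case: S_right_inverses => sS _ _ lt Mm; rewrite (subvP (sS i lt)) // memv_img.
Qed.

(* S_i commutes on g3 with every ad y, by linearity in y. *)
Lemma S_br i y m : (i < n)%N -> m \in g3 -> br y (S i m) = S i (br y m).
Proof.
case: S_right_inverses => _ cS _ lt Mm.
rewrite (coord_vbasis (memvf y)) !brsuml linear_sum; apply: eq_bigr => j _.
rewrite !brZl linearZ; congr (_ *: _).
by rewrite -!adE; symmetry; apply: cS => //; exists j.
Qed.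

Definition retr : 'End(V) := \sum_(i < n) (S i \o ad_basis i)%VF.
Lemma retrE v : retr v = \sum_(i < n) S i (br (e i) v).
Proof. by rewrite sum_lfunE; apply: eq_bigr => i _; rewrite comp_lfunE adE. Qed.

Lemma retr_id m : m \in g3 -> retr m = m.
Proof.
case: S_right_inverses => _ cS TS Mm; rewrite retrE -[RHS]TS //.
by apply: eq_bigr => i _; rewrite -adE -/(ad_basis i) cS //; exists i.
Qed.

Lemma br_retr v z : v \in g2 -> br z (retr v) = br z v.
Proof.
move=> Vv; rewrite retrE brsumr.
rewrite (eq_bigr (fun i : 'I_n => S i (br (e i) (br z v)))); last first.
  by move=> i _; rewrite S_br ?br_g3 // ad_comm_g2.
by rewrite -retrE retr_id // br_g3.
Qed.

Definition proj3 : 'End(V) := (retr \o projv g2)%VF.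
Lemma proj3E v : proj3 v = retr (projv g2 v). Proof. exact: comp_lfunE. Qed.
Lemma proj3_g3 v : proj3 v \in g3.
Proof.
rewrite proj3E retrE; apply: memv_suml => i _.
by apply: S_g3 => //; apply: br_g3; apply: memv_proj.
Qed.
Lemma proj3_id m : m \in g3 -> proj3 m = m.
Proof. by move=> Mm; rewrite proj3E projv_id ?retr_id // (subvP g3_sub_g2). Qed.
Lemma br_proj3 u z : u \in g2 -> br z (proj3 u) = br z u.
Proof. by move=> Uu; rewrite proj3E projv_id // br_retr. Qed.

Definition dproj : 'End(V) := (\1 - proj3)%VF.
Lemma dprojE v : dproj v = v - proj3 v.
Proof. by rewrite /dproj add_lfunE opp_lfunE id_lfunE. Qed.
Lemma dproj_g3 m : m \in g3 -> dproj m = 0.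
Proof. by move=> Mm; rewrite dprojE proj3_id // subrr. Qed.
Lemma proj3_dproj v : proj3 (dproj v) = 0.
Proof. by rewrite dprojE linearB /= (proj3_id (proj3_g3 v)) subrr. Qed.
Lemma dproj_idem v : dproj (dproj v) = dproj v.
Proof. by rewrite {1}dprojE proj3_dproj subr0. Qed.
Lemma br_dproj u z : u \in g2 -> br z (dproj u) = 0.
Proof. by move=> Uu; rewrite dprojE brBr br_proj3 // subrr. Qed.
Lemma br_dproj_l u z : u \in g2 -> br (dproj u) z = 0.
Proof. by move=> Uu; rewrite br_anti br_dproj // oppr0. Qed.

Definition coch : 'End(V) := \sum_(i < n) (S i \o proj3 \o ad_basis i)%VF.
Lemma cochE z : coch z = \sum_(i < n) S i (proj3 (br (e i) z)).
Proof. by rewrite sum_lfunE; apply: eq_bigr => i _; rewrite !comp_lfunE adE. Qed.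
Lemma coch_g3 z : coch z \in g3.
Proof. by rewrite cochE; apply: memv_suml => i _; apply: S_g3 => //; apply: proj3_g3. Qed.
Lemma coch_central u : (forall x, br x u = 0) -> coch u = 0.
Proof. by move=> H; rewrite cochE big1 // => i _; rewrite H !linear0. Qed.

Lemma coch_coboundary y z : br y (coch z) - br z (coch y) = proj3 (br y z).
Proof.
have brE w t : br w (coch t) = \sum_(i < n) S i (br w (br (e i) t)).
  rewrite cochE brsumr; apply: eq_bigr => i _.
  by rewrite S_br ?proj3_g3 // br_proj3 // br_g2.
rewrite !brE -sumrB proj3E projv_id ?br_g2 // retrE; apply: eq_bigr => i _.
rewrite -linearB /=; congr (S i _); apply/eqP; rewrite subr_eq.
have := br_jacobi (e i) y z; rewrite (br_anti z (e i)) brNr => /eqP.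
by rewrite addrAC subr_eq0 addrC => /eqP ->.
Qed.

Definition wmap : 'End(V) := (coch \o dproj + proj3)%VF.
Lemma wmapE z : wmap z = coch (dproj z) + proj3 z.
Proof. by rewrite add_lfunE comp_lfunE. Qed.
Lemma wmap_g2 z : wmap z \in g2.
Proof. by rewrite (subvP g3_sub_g2) // wmapE memvD ?coch_g3 ?proj3_g3. Qed.

Definition half : K := (2%:R)^-1.
Lemma halfK (w : V) : half *: w + half *: w = w.
Proof. by rewrite -scalerDr -mulr2n -scaler_nat scalerA mulVf // scale1r. Qed.

Definition lr_prod x y := half *: dproj (br (dproj x) (dproj y)) + br (dproj x) (wmap y).

Lemma dproj_lr_prod x y : dproj (lr_prod x y) = half *: dproj (br (dproj x) (dproj y)).
Proof.
by rewrite /lr_prod linearD linearZ /= dproj_idem (dproj_g3 (br_g3 _ (wmap_g2 y))) addr0.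
Qed.
Lemma proj3_lr_prod x y : proj3 (lr_prod x y) = br (dproj x) (wmap y).
Proof.
by rewrite /lr_prod linearD linearZ /= proj3_dproj scaler0 add0r (proj3_id (br_g3 _ (wmap_g2 y))).
Qed.

Lemma lr_prod_left x y z : lr_prod x (lr_prod y z) = br (dproj x) (br (dproj y) (wmap z)).
Proof.
rewrite {1}/lr_prod dproj_lr_prod brZr (br_dproj _ (br_g2 _ _)) scaler0 linear0 scaler0 add0r.
rewrite wmapE dproj_lr_prod linearZ /= coch_central ?scaler0 ?add0r ?proj3_lr_prod //.
by move=> t; apply: br_dproj; apply: br_g2.
Qed.

(* (x . y) . z = 0 since dproj (x . y) is central. *)
Lemma lr_prod_right x y z : lr_prod (lr_prod x y) z = 0.
Proof.
by rewrite /lr_prod dproj_lr_prod !brZl !(br_dproj_l _ (br_g2 _ _)) !scaler0 linear0 scaler0 addr0.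
Qed.

Lemma lr_prod_comm x y : lr_prod x y - lr_prod y x = br x y.
Proof.
rewrite /lr_prod (br_anti (dproj y) (dproj x)) linearN scalerN.
rewrite opprD opprK addrACA halfK !wmapE !brDr opprD addrACA coch_coboundary addrA.
rewrite dprojE subrK.
have E1 : br (dproj x) (proj3 y) = br x (proj3 y).
  by rewrite dprojE brBl (g3_abelian (proj3_g3 x) (proj3_g3 y)) subr0.
have E2 : br (dproj y) (proj3 x) = - br (proj3 x) y.
  by rewrite dprojE brBl (g3_abelian (proj3_g3 y) (proj3_g3 x)) subr0 br_anti.
have E3 : br (x - proj3 x) (y - proj3 y) = br x y - br x (proj3 y) - br (proj3 x) y.
  by rewrite brBl !brBr (g3_abelian (proj3_g3 x) (proj3_g3 y)) subr0.
by rewrite E1 E2 !dprojE E3 opprK addrA addrAC subrK subrK.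
Qed.

Lemma lr_prod_LR : LR_structure br lr_prod.
Proof.
have scalerC (k l : K) (w : V) : k *: (l *: w) = l *: (k *: w).
  by rewrite !scalerA mulrC.
split.
- split=> k x y z; rewrite /lr_prod.
    rewrite linearP /= !brDl !brZl linearP /= scalerDr (scalerC half k).
    by rewrite scalerDr addrACA.
  rewrite [wmap _]linearP linearP /= !brDr !brZr linearP /= scalerDr (scalerC half k).
  by rewrite scalerDr addrACA.
- by move=> x y z; rewrite !lr_prod_left ad_comm_g2 // wmap_g2.
- by move=> x y z; rewrite !lr_prod_right.
- exact: lr_prod_comm.
Qed.
End Construction.

Lemma two_step_LR_exists : exists p : V -> V -> V, LR_structure br p.
Proof.
by have [S HS] := ad_basis_right_inverses; exists (lr_prod S); apply: lr_prod_LR.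
Qed.
End TwoStepSolvable.
End LieBracket.

Unset Implicit Arguments.

Theorem mainTheorem13 (K : fieldType) (V : vectType K) (br : V -> V -> V) :
  [pchar K] =i pred0 ->
  is_lie_bracket br ->
  two_step_solvable br ->
  lcs_inf_is br (lcs br 3) ->
  exists p : V -> V -> V, LR_structure br p.
Proof.
move=> char0 [[br_linl br_linr] br_alt br_jacobi] two_step g_inf.
have two_neq0 : (2%:R : K) != 0 by move/pcharf0P: char0 => ->.
have g3_sub_g4 : (lcs br 3 <= lcs br 4)%VS.
  by apply/subvP => m /(g_inf m) g3m; apply: g3m.
exact: two_step_LR_exists br_linl br_linr br_alt br_jacobi two_step g3_sub_g4 two_neq0.
Qed.
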